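(* Let $(\mathcal P,\cdot,[-,\dots,-])$ be a nonzero solvable finite-dimensional Poisson $n$-Lie algebra over an algebraically closed field of characteristic zero. Then there exists a nonzero vector $v\in\mathcal P$ that is a common eigenvector of all operators $P_x$ ($x\in\mathcal P$) and $Q_y$ ($y\in\wedge^{n-1}\mathcal P$).
   Context: A Poisson $n$-Lie algebra is a commutative associative algebra $(\mathcal P,\cdot)$ with an $n$-linear skew-symmetric bracket satisfying the fundamental identity $[x_1,\dots,x_{n-1},[y_1,\dots,y_n]]=\sum_{i=1}^n[y_1,\dots,[x_1,\dots,x_{n-1},y_i],\dots,y_n]$ and the Leibniz rule $[y\cdot z,x_2,\dots,x_n]=y\cdot[z,x_2,\dots,x_n]+z\cdot[y,x_2,\dots,x_n]$. $P_x(z)=x\cdot z$; for $y=y_1\wedge\cdots\wedge y_{n-1}$, $Q_y(z)=[y_1,\dots,y_{n-1},z]$, extended linearly. $\mathcal P$ is solvable if $\mathcal P^{(s)}=0$ for some $s$, where $\mathcal P^{(1)}=\mathcal P$, $\mathcal P^{(k+1)}=[\mathcal P^{(k)},\mathcal P^{(k)},\mathcal P,\dots,\mathcal P]+\mathcal P^{(k)}\cdot\mathcal P^{(k)}$ (linear spans). *)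

From HB Require Import structures.
From mathcomp Require Import all_boot all_order all_algebra all_fingroup.
Set Implicit Arguments. Unset Strict Implicit. Unset Printing Implicit Defensive.
Import GRing.Theory.
Local Open Scope ring_scope.

Section PoissonNLie.
Variables (F : fieldType) (V : vectType F) (n : nat).

Definition upd (x : 'I_n -> V) (i : 'I_n) (w : V) : 'I_n -> V :=
  fun j => if j == i then w else x j.

(* the n-tuple (y_1, ..., y_{n-1}, z) *)
Definition ext (y : 'I_n.-1 -> V) (z : V) : 'I_n -> V :=
  fun j => if insub (val j) : option 'I_n.-1 is Some k then y k else z.

Variables (mul : V -> V -> V) (br : ('I_n -> V) -> V).

Record is_poisson_nlie : Prop := {
  mul_linl : forall (a : F) (u w z : V), mul (a *: u + w) z = a *: mul u z + mul w z;
  mul_linr : forall (a : F) (u w z : V), mul z (a *: u + w) = a *: mul z u + mul z w;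
  mul_comm : forall u w, mul u w = mul w u;
  mul_assoc : forall u w z, mul u (mul w z) = mul (mul u w) z;
  br_lin : forall (x : 'I_n -> V) (i : 'I_n) (a : F) (u w : V),
      br (upd x i (a *: u + w)) = a *: br (upd x i u) + br (upd x i w);
  br_skew : forall (s : 'S_n) (x : 'I_n -> V),
      br (fun i => x (s i)) = (-1) ^+ (odd_perm s) *: br x;
  br_fundamental : forall (x : 'I_n.-1 -> V) (y : 'I_n -> V),
      br (ext x (br y)) = \sum_(i < n) br (upd y i (br (ext x (y i))));
  br_leibniz : forall (x : 'I_n -> V) (i : 'I_n) (y z : V), val i = 0%N ->
      br (upd x i (mul y z)) = mul y (br (upd x i z)) + mul z (br (upd x i y))
}.

Definition span_pred (S : V -> Prop) (v : V) : Prop :=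
  forall W : {vspace V}, (forall u, S u -> u \in W) -> v \in W.

(* derived_series k = P^(k+1):  P^(1) = P,
   P^(k+1) = span [P^(k), P^(k), P, ..., P] + span (P^(k) . P^(k)) *)
Fixpoint derived_series (k : nat) : V -> Prop :=
  match k with
  | 0 => fun _ => True
  | k'.+1 => span_pred (fun v =>
      (exists x : 'I_n -> V, (forall i : 'I_n, (val i < 2)%N -> derived_series k' (x i))
                             /\ v = br x)
      \/ (exists a b, derived_series k' a /\ derived_series k' b /\ v = mul a b))
  end.

Definition solvable_pnl : Prop :=
  exists s : nat, forall v, derived_series s v -> v = 0.

End PoissonNLie.

From HB Require Import structures.
From mathcomp Require Import all_boot all_order all_algebra all_fingroup.
From Stdlib Require Import ClassicalEpsilon FunctionalExtensionality Classical.
Set Implicit Arguments. Unset Strict Implicit. Unset Printing Implicit Defensive.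
Import GRing.Theory.
Local Open Scope ring_scope.

(* The operators P_x and Q_y span a Lie algebra of endomorphisms of P: the
   P_x commute, the Leibniz rule gives [Q_y, P_x] = P_(Q_y x), and the
   fundamental identity writes [Q_y, Q_z] as a sum of operators Q_z'.
   Grading the generators by how deep their arguments lie in the derived
   series of P gives a chain of ideals of this Lie algebra, each commutator of
   a term lying in the next one and the chain reaching 0 because P is
   solvable.  Lie's theorem then yields a common eigenvector; it is proved by
   descending the chain, the invariance lemma (a trace computation on the
   Krylov space of an eigenvector) showing that at each step a weight space of
   the current ideal is stable under all operators. *)

Section SpanOfPred.
Variables (K : fieldType) (U : vectType K).

Lemma exists_least_vspace (S : U -> Prop) : exists W : {vspace U},
  (forall u, S u -> u \in W) /\
  (forall W' : {vspace U}, (forall u, S u -> u \in W') -> (W <= W')%VS).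
Proof.
suff least_below d (W : {vspace U}) : (\dim W < d)%N -> (forall u, S u -> u \in W) ->
    exists W : {vspace U}, (forall u, S u -> u \in W) /\
    (forall W' : {vspace U}, (forall u, S u -> u \in W') -> (W <= W')%VS).
  by apply: (least_below _ fullv (ltnSn _)) => u _; apply: memvf.
elim: d W => // d IH W dimW SW.
have [[W' [SW' notWW']] | Wleast] :=
  classic (exists W' : {vspace U}, (forall u, S u -> u \in W') /\ ~ (W <= W')%VS).
  apply: (IH (W :&: W')%VS); last by move=> u Su; rewrite memv_cap SW ?SW'.
  have : (\dim (W :&: W') < \dim W)%N.
    rewrite (ltn_leqif (dimv_leqif_sup (capvSl W W'))) subv_cap subvv /=.
    exact/negP.
  by move/leq_trans; apply; rewrite -ltnS.
exists W; split=> // W' SW'; apply: NNPP => notWW'.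
by apply: Wleast; exists W'.
Qed.

Definition vspan_pred (S : U -> Prop) : {vspace U} :=
  proj1_sig (constructive_indefinite_description _ (exists_least_vspace S)).

Lemma vspan_pred_mem (S : U -> Prop) u : S u -> u \in vspan_pred S.
Proof.
exact: (proj1 (proj2_sig (constructive_indefinite_description _ (exists_least_vspace S)))).
Qed.

Lemma vspan_pred_min (S : U -> Prop) (W : {vspace U}) :
  (forall u, S u -> u \in W) -> (vspan_pred S <= W)%VS.
Proof.
exact: (proj2 (proj2_sig (constructive_indefinite_description _ (exists_least_vspace S)))).
Qed.

Lemma vspan_predS (S S' : U -> Prop) :
  (forall u, S u -> S' u) -> (vspan_pred S <= vspan_pred S')%VS.
Proof. by move=> SS'; apply: vspan_pred_min => u /SS'; apply: vspan_pred_mem. Qed.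

Lemma span_predP (S : U -> Prop) v : span_pred S v <-> v \in vspan_pred S.
Proof.
split=> [|Sv W SW]; first by apply; apply: vspan_pred_mem.
exact: subvP (vspan_pred_min SW) _ Sv.
Qed.

End SpanOfPred.

Section LinearOfFun.
Variables (K : fieldType) (U1 U2 : vectType K).

Definition lfun_of (f : U1 -> U2) (fL : linear f) : 'Hom(U1, U2) :=
  linfun (HB.pack_for {linear U1 -> U2} f (GRing.isLinear.Build K U1 U2 *:%R f fL)).

Lemma lfun_ofE (f : U1 -> U2) (fL : linear f) u : lfun_of fL u = f u.
Proof. exact: lfunE. Qed.

Lemma vspan_pred_lfun (f : 'Hom(U1, U2)) (S : U1 -> Prop) (W : {vspace U2}) u :
  (forall v, S v -> f v \in W) -> u \in vspan_pred S -> f u \in W.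
Proof.
move=> SW /(subvP (vspan_pred_min (W := (f @^-1: W)%VS) _)); rewrite -memv_preim.
by apply=> v /SW; rewrite memv_preim.
Qed.

End LinearOfFun.

Lemma vspan_pred_bilinear (K : fieldType) (U1 U2 U3 : vectType K) (B : U1 -> U2 -> U3)
    (S1 : U1 -> Prop) (S2 : U2 -> Prop) (W : {vspace U3}) :
  (forall b, linear (B^~ b)) -> (forall a, linear (B a)) ->
  (forall a b, S1 a -> S2 b -> B a b \in W) ->
  forall a b, a \in vspan_pred S1 -> b \in vspan_pred S2 -> B a b \in W.
Proof.
move=> BLl BLr SW a b aS bS.
have S1W a' : S1 a' -> B a' b \in W.
  move=> S1a'; rewrite -(lfun_ofE (BLr a')); apply: (vspan_pred_lfun _ bS) => b' S2b'.
  by rewrite lfun_ofE; apply: SW.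
rewrite -(lfun_ofE (BLl b)); apply: (vspan_pred_lfun _ aS) => a' S1a'.
by rewrite lfun_ofE; apply: S1W.
Qed.

Section Commutator.
Variables (K : fieldType) (U : vectType K).
Implicit Types f g : 'End(U).

Definition comm_lfun f g : 'End(U) := (f \o g)%VF - (g \o f)%VF.

Lemma comm_lfunE f g u : comm_lfun f g u = f (g u) - g (f u).
Proof. by rewrite /comm_lfun add_lfunE opp_lfunE !comp_lfunE. Qed.

Lemma comm_lfunC f g : comm_lfun f g = - comm_lfun g f.
Proof. by rewrite /comm_lfun opprB. Qed.

Lemma comm_lfun_linearl g : linear (comm_lfun^~ g).
Proof.
move=> c f1 f2; apply/lfunP => u; rewrite !(comm_lfunE, add_lfunE, scale_lfunE).
by rewrite linearP /= scalerBr opprD addrACA.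
Qed.

Lemma comm_lfun_linearr f : linear (comm_lfun f).
Proof.
move=> c g1 g2; apply/lfunP => u; rewrite !(comm_lfunE, add_lfunE, scale_lfunE).
by rewrite linearP /= scalerBr opprD addrACA.
Qed.

Lemma comm_lfun_vspan_pred (S1 S2 : 'End(U) -> Prop) (W : {vspace 'End(U)}) :
  (forall f g, S1 f -> S2 g -> comm_lfun f g \in W) ->
  forall f g, f \in vspan_pred S1 -> g \in vspan_pred S2 -> comm_lfun f g \in W.
Proof. exact: vspan_pred_bilinear comm_lfun_linearl comm_lfun_linearr. Qed.

Definition mx_on m (e : m.-tuple U) f : 'M[K]_m := \matrix_(i, j) coord e j (f e`_i).

Lemma mx_on_comp m (e : m.-tuple U) f g : (forall i : 'I_m, g e`_i \in <<e>>%VS) ->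
  mx_on e (f \o g)%VF = mx_on e g *m mx_on e f.
Proof.
move=> ge; apply/matrixP => i j; rewrite !mxE comp_lfunE (coord_span (ge i)).
by rewrite !linear_sum; apply: eq_bigr => k _; rewrite !linearZ /= !mxE.
Qed.

Lemma mxtrace_on_comm m (e : m.-tuple U) f g :
  (forall i : 'I_m, f e`_i \in <<e>>%VS) -> (forall i : 'I_m, g e`_i \in <<e>>%VS) ->
  \tr (mx_on e (comm_lfun f g)) = 0.
Proof.
move=> fe ge; have -> : mx_on e (comm_lfun f g) = mx_on e (f \o g)%VF - mx_on e (g \o f)%VF.
  by apply/matrixP => i j; rewrite !mxE /comm_lfun add_lfunE opp_lfunE linearB.
by rewrite raddfB /= !mx_on_comp // mxtrace_mulC subrr.
Qed.

Hypothesis char0 : [pchar K] =i pred0.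

Lemma char0_mulrn_eq0 (c : K) m : (0 < m)%N -> c *+ m = 0 -> c = 0.
Proof.
move=> m_gt0 /eqP; rewrite -mulr_natr mulf_eq0 => /orP[/eqP // |].
by have /pcharf0P -> := char0; rewrite eqn0Ngt m_gt0.
Qed.

Lemma comm_lfun_diag_eq0 m (e : m.-tuple U) f g c : (0 < m)%N ->
  (forall i : 'I_m, f e`_i \in <<e>>%VS) -> (forall i : 'I_m, g e`_i \in <<e>>%VS) ->
  (forall i : 'I_m, coord e i (comm_lfun f g e`_i) = c) -> c = 0.
Proof.
move=> m_gt0 fe ge diag; apply: char0_mulrn_eq0 m_gt0 _.
rewrite -(mxtrace_on_comm fe ge) /mxtrace -[m in c *+ m]card_ord -sumr_const.
by apply: eq_bigr => i _; rewrite mxE diag.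
Qed.

Lemma comm_lfun_scalar_eq0 f g (W : {vspace U}) c : W != 0%VS ->
  (forall w, w \in W -> f w \in W) -> (forall w, w \in W -> g w \in W) ->
  (forall w, w \in W -> comm_lfun f g w = c *: w) -> c = 0.
Proof.
move=> W0 fW gW cW; have eW := vbasisP W.
have memW (i : 'I_(\dim W)) : (vbasis W)`_i \in W.
  by apply/vbasis_mem/mem_nth; rewrite size_tuple.
apply: (@comm_lfun_diag_eq0 _ (vbasis W) f g); rewrite ?lt0n ?dimv_eq0 ?(span_basis eW) //.
- by move=> i; apply: fW.
- by move=> i; apply: gW.
by move=> i; rewrite cW // linearZ /= coord_free ?(basis_free eW) // eqxx mulr1.
Qed.

End Commutator.

Section Eigenvectors.
Variables (F : closedFieldType) (V : vectType F).
Implicit Types (f g : 'End(V)) (W : {vspace V}).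

Definition scalar_on f W := exists c : F, forall w, w \in W -> f w = c *: w.

Lemma exists_eigenvector g W : W != 0%VS -> (forall w, w \in W -> g w \in W) ->
  exists mu : F, exists w, [/\ w \in W, w != 0 & g w = mu *: w].
Proof.
move=> W0 gW; set e := vbasis W.
have eW (i : 'I_(\dim W)) : e`_i \in W by apply/vbasis_mem/mem_nth; rewrite size_tuple.
have [mu] : exists mu, root (char_poly (mx_on e g)) mu.
  by apply/closed_rootP; rewrite size_char_poly eqSS dimv_eq0.
rewrite -eigenvalue_root_char => /eigenvalueP [v vM v0].
exists mu, (\sum_i v 0 i *: e`_i); split.
- by apply: rpred_sum => i _; apply: rpredZ.
- have /freeP e_free := basis_free (vbasisP W).
  by apply: contra v0 => /eqP /e_free v_eq0; apply/eqP/rowP => j; rewrite mxE v_eq0.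
rewrite linear_sum /=.
under eq_bigr => i _ do rewrite linearZ /= (coord_vbasis (gW _ (eW i))) scaler_sumr.
rewrite exchange_big scaler_sumr; apply: eq_bigr => j _.
have /= := congr1 (fun A : 'rV_(\dim W) => A 0 j) vM; rewrite !mxE scalerA => <-.
by rewrite scaler_suml; apply: eq_bigr => i _; rewrite scalerA mxE.
Qed.

Lemma exists_common_eigenvector (G : {vspace 'End(V)}) W : W != 0%VS ->
  (forall g w, g \in G -> w \in W -> g w \in W) ->
  (forall f g w, f \in G -> g \in G -> w \in W -> f (g w) = g (f w)) ->
  exists w, [/\ w \in W, w != 0 & forall g, g \in G -> exists c, g w = c *: w].
Proof.
elim: {W}(\dim W).+1 {-2}W (ltnSn (\dim W)) => // d IH W.
rewrite ltnS => dimW W0 GW Gcomm.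
have [[g [gG gW_nscalar]] | Gscalar] :=
  classic (exists g, g \in G /\ ~ scalar_on g W); last first.
  exists (vpick W); split; rewrite ?memv_pick ?vpick0 // => g gG.
  have [[c gc] | ] := classic (scalar_on g W); first by exists c; apply/gc/memv_pick.
  by move=> gW_nscalar; case: Gscalar; exists g.
have [mu [w0 [w0W w0_neq0 gw0]]] := exists_eigenvector W0 (GW g^~ gG).
pose W2 := (W :&: lker (g - mu *: \1%VF))%VS.
have memW2 w : (w \in W2) = (w \in W) && (g w == mu *: w).
  by rewrite memv_cap memv_ker add_lfunE opp_lfunE scale_lfunE id_lfunE subr_eq0.
have W2W : (W2 <= W)%VS by apply: capvSl.
have dimW2 : (\dim W2 < d)%N.
  apply: leq_trans dimW; rewrite (ltn_leqif (dimv_leqif_sup W2W)).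
  apply: contra_notN gW_nscalar => /subvP WW2; exists mu => w /[dup] /WW2.
  by rewrite memW2 => /andP[_ /eqP].
have W2_neq0 : W2 != 0%VS.
  by apply: contraNneq w0_neq0 => W2_0; move: (memW2 w0); rewrite W2_0 memv0 w0W gw0 eqxx.
have GW2 f w : f \in G -> w \in W2 -> f w \in W2.
  move=> fG; rewrite !memW2 => /andP[wW /eqP gw].
  by rewrite GW //= -Gcomm // gw linearZ.
have [w [wW2 w_neq0 wG]] := IH W2 dimW2 W2_neq0 GW2 (fun f f' w fG f'G wW2 =>
  Gcomm f f' w fG f'G (subvP W2W w wW2)).
by exists w; split => //; apply: (subvP W2W).
Qed.

End Eigenvectors.

Lemma coord_span_take (K : fieldType) (U : vectType K) m (X : m.-tuple U) (i : 'I_m) u :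
  free X -> u \in <<take i X>>%VS -> coord X i u = 0.
Proof.
move=> freeX /coord_span ->; rewrite linear_sum big1 // => k _; rewrite linearZ /= mulrC.
have ki : (k < i)%N := leq_trans (ltn_ord k) (geq_minl _ _).
have km : (k < m)%N := ltn_trans ki (ltn_ord i).
rewrite nth_take // -[k : nat]/(nat_of_ord (Ordinal km)) coord_free //.
case: eqP => [/(congr1 val) /= ik | _]; last exact: mul0r.
by rewrite ik ltnn in ki.
Qed.

Section Invariance.
Variables (F : closedFieldType) (V : vectType F).
Hypothesis char0 : [pchar F] =i pred0.
Variables (G : {vspace 'End(V)}) (x : 'End(V)) (w : V) (wt : 'End(V) -> F).
Hypotheses (w_neq0 : w != 0) (GxG : forall g, g \in G -> comm_lfun g x \in G).
Hypothesis wtP : forall g, g \in G -> g w = wt g *: w.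

Let e k := iter k x w.
Let krylov i := <<mkseq e i>>%VS.

Let mem_krylov k i : (k < i)%N -> e k \in krylov i.
Proof. by move=> ki; apply/memv_span/map_f; rewrite mem_iota. Qed.

Let krylovS i j : (i <= j)%N -> (krylov i <= krylov j)%VS.
Proof.
move=> ij; apply/span_subvP => v /mapP[k]; rewrite mem_iota => /andP[_ ki] ->.
exact/mem_krylov/(leq_trans ki ij).
Qed.

Let krylov_step i u : u \in krylov i -> x u \in krylov i.+1.
Proof.
move=> uU; have xU : (<<map x (mkseq e i)>> <= krylov i.+1)%VS.
  apply/span_subvP => v /mapP[u' /mapP[k]]; rewrite mem_iota => /andP[_ ki] -> ->.
  exact: (@mem_krylov k.+1 i.+1 ki).
by apply: (subvP xU); rewrite -limg_span memv_img.
Qed.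

Let krylov_weight i g : g \in G -> g (e i) - wt g *: e i \in krylov i.
Proof.
elim: i g => [|i IH] g gG; first by rewrite /= wtP // subrr mem0v.
have -> : g (e i.+1) - wt g *: e i.+1 = (comm_lfun g x (e i) - wt (comm_lfun g x) *: e i)
    + wt (comm_lfun g x) *: e i + x (g (e i) - wt g *: e i).
  by rewrite comm_lfunE linearB linearZ /= subrK [x (wt g *: _)]linearZ /= addrA subrK scalerN.
rewrite rpredD ?krylov_step ?IH // rpredD ?rpredZ ?mem_krylov //.
exact: subvP (krylovS (leqnSn i)) _ (IH _ (GxG gG)).
Qed.

Let krylov_free i : (forall k, (k < i)%N -> e k \notin krylov k) -> free (mkseq e i).
Proof.
elim: i => [|i IH] e_new; first exact: nil_free.
rewrite mkseqS.
have /perm_free -> : perm_eq (rcons (mkseq e i) (e i)) (e i :: mkseq e i).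
  by rewrite perm_rcons.
rewrite free_cons e_new // IH // => k ki.
exact/e_new/ltnW.
Qed.

Let krylov_stable : exists m, [/\ (0 < m)%N, free (mkseq e m) & e m \in krylov m].
Proof.
have not_free : ~~ free (mkseq e (dim V).+1).
  rewrite /free size_mkseq ltn_eqF // ltnS -dimvf; exact/dimvS/subvf.
have /existsP[j ej] : [exists k : 'I_(dim V).+1, e k \in krylov k].
  apply: contraR not_free => /existsPn e_new.
  by apply: krylov_free => k kl; apply: (e_new (Ordinal kl)).
have [m em min_m] := ex_minnP (ex_intro (fun k => e k \in krylov k) _ ej).
exists m; split=> //.
  by rewrite lt0n; apply: contraTneq em => ->; rewrite /krylov span_nil memv0.
by apply: krylov_free => k km; apply: contraL km => /min_m; rewrite -leqNgt.
Qed.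

Lemma weight_comm_eq0 g : g \in G -> wt (comm_lfun g x) = 0.
Proof.
move=> gG; have [m [m_gt0 free_m stable_m]] := krylov_stable.
set s := mkseq e m; have sz : size s = m := size_mkseq e m.
have im (i : 'I_(size s)) : (i < m)%N := leq_trans (ltn_ord i) (eq_leq sz).
pose E := in_tuple s.
have Ei (i : 'I_(size s)) : E`_i = e i by rewrite /= nth_mkseq.
have krylov_take (i : 'I_(size s)) : krylov i = <<take i E>>%VS.
  by rewrite /= /s /mkseq -map_take take_iota (minn_idPl (ltnW (im i))).
have stab_G f (i : 'I_(size s)) : f \in G -> f E`_i \in <<E>>%VS.
  move=> fG; rewrite Ei -(subrK (wt f *: e i) (f (e i))) rpredD ?rpredZ ?mem_krylov //.
  exact: subvP (krylovS (ltnW (im i))) _ (krylov_weight _ fG).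
apply: (@comm_lfun_diag_eq0 _ _ char0 _ E g x) => [|i|i|i].
- by rewrite sz.
- exact: stab_G.
- rewrite Ei -iterS; case: (ltngtP i.+1 m) => [lt_im | gt_im | eq_im].
  + exact: (@mem_krylov i.+1 m lt_im).
  + by rewrite ltnS leqNgt im in gt_im.
  + by move: stable_m; rewrite -[in e m]eq_im.
- rewrite Ei -(subrK (wt (comm_lfun g x) *: e i) (comm_lfun g x (e i))) linearD /=.
  rewrite coord_span_take -?krylov_take ?krylov_weight ?GxG // add0r linearZ /= -Ei.
  by rewrite coord_free // eqxx mulr1.
Qed.

End Invariance.

Section LieTheorem.
Variables (F : closedFieldType) (V : vectType F).
Hypothesis char0 : [pchar F] =i pred0.
Implicit Types (f g : 'End(V)) (G L : {vspace 'End(V)}) (W : {vspace V}).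

Definition eigenweight (w0 : V) (g : 'End(V)) : F := coord [tuple w0] 0 (g w0).

Lemma eigenweight_scalar w0 : scalar (eigenweight w0).
Proof. by move=> c f g; rewrite /eigenweight add_lfunE scale_lfunE linearP. Qed.

HB.instance Definition _ w0 :=
  GRing.isLinear.Build F 'End(V) F *%R (eigenweight w0) (eigenweight_scalar w0).

Lemma eigenweightP w0 g c : w0 != 0 -> g w0 = c *: w0 -> g w0 = eigenweight w0 g *: w0.
Proof.
move=> w0_neq0 gw0; rewrite /eigenweight gw0 linearZ /= (coord_free 0 0) ?seq1_free //.
by rewrite eqxx mulr1.
Qed.

Definition weight_space W G (wt : {scalar 'End(V)}) : {vspace V} :=
  (W :&: \bigcap_(i < \dim G) lker ((vbasis G)`_i - wt (vbasis G)`_i *: \1%VF))%VS.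

Lemma weight_spaceP W G (wt : {scalar 'End(V)}) w :
  w \in weight_space W G wt <-> w \in W /\ (forall g, g \in G -> g w = wt g *: w).
Proof.
have eigen_b i : (w \in lker ((vbasis G)`_i - wt (vbasis G)`_i *: \1%VF)) =
    ((vbasis G)`_i w == wt (vbasis G)`_i *: w).
  by rewrite memv_ker add_lfunE opp_lfunE scale_lfunE id_lfunE subr_eq0.
rewrite memv_cap [w \in (\bigcap_(i < _) _)%VS]memvE.
split=> [/andP[wW /subv_bigcapP wb] | [wW wG]]; last first.
  rewrite wW; apply/subv_bigcapP => i _.
  by rewrite -memvE eigen_b wG // vbasis_mem ?mem_nth ?size_tuple.
split=> // g /coord_vbasis ->; rewrite sum_lfunE linear_sum scaler_suml.
apply: eq_bigr => i _; rewrite scale_lfunE linearZ /=.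
have /eqP -> : (vbasis G)`_i w == wt (vbasis G)`_i *: w by rewrite -eigen_b memvE wb.
by rewrite scalerA.
Qed.

Lemma exists_stable_weight_space L G W : W != 0%VS ->
  (forall f w, f \in L -> w \in W -> f w \in W) -> (G <= L)%VS ->
  (forall f g, f \in L -> g \in G -> comm_lfun g f \in G) ->
  (forall a b, a \in G -> b \in G -> scalar_on (comm_lfun a b) W) ->
  exists W2 : {vspace V}, [/\ W2 != 0%VS,
    (forall f w, f \in L -> w \in W2 -> f w \in W2) &
    (forall g, g \in G -> scalar_on g W2)].
Proof.
move=> W0 LW GL LGG Gscalar.
have GW g w : g \in G -> w \in W -> g w \in W by move=> /(subvP GL); apply: LW.
have Gcomm a b w : a \in G -> b \in G -> w \in W -> a (b w) = b (a w).
  move=> aG bG wW; have [c cW] := Gscalar a b aG bG.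
  have c0 : c = 0 := comm_lfun_scalar_eq0 char0 W0 (GW a^~ aG) (GW b^~ bG) cW.
  by apply/eqP; rewrite -subr_eq0 -comm_lfunE cW // c0 scale0r.
have [w0 [w0W w0_neq0 w0G]] := exists_common_eigenvector W0 GW Gcomm.
pose wt := eigenweight w0 : {scalar 'End(V)}.
have wtP g : g \in G -> g w0 = wt g *: w0 by move=> /w0G[c]; apply: eigenweightP.
have wt_comm f g : f \in L -> g \in G -> wt (comm_lfun g f) = 0.
  by move=> fL; apply: (weight_comm_eq0 char0 w0_neq0 (LGG f ^~ fL) wtP).
exists (weight_space W G wt); split.
- apply: contraNneq w0_neq0 => W2_0.
  by rewrite -memv0 -W2_0; apply/weight_spaceP.
- move=> f w fL /weight_spaceP[wW wG]; apply/weight_spaceP; split=> [|g gG]; first exact: LW.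
  have /eqP : comm_lfun g f w = 0 by rewrite wG ?LGG ?wt_comm ?scale0r.
  by rewrite comm_lfunE subr_eq0 => /eqP ->; rewrite (wG g gG) linearZ.
- by move=> g gG; exists (wt g) => w /weight_spaceP[_]; apply.
Qed.

Lemma lie_common_eigenvector (L : nat -> {vspace 'End(V)}) (N : nat) :
  (fullv : {vspace V}) != 0%VS ->
  (forall l, (L l <= L 0%N)%VS) ->
  (forall l f g, f \in L 0%N -> g \in L l -> comm_lfun g f \in L l) ->
  (forall l a b, a \in L l -> b \in L l -> comm_lfun a b \in L l.+1) ->
  (forall f, f \in L N -> f = 0) ->
  exists v, v != 0 /\ forall f, f \in L 0%N -> exists c, f v = c *: v.
Proof.
move=> V0 L_sub0 L_ideal L_comm L_N.
have descend j W : W != 0%VS -> (forall f w, f \in L 0%N -> w \in W -> f w \in W) ->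
    (forall f, f \in L j -> scalar_on f W) ->
    exists v, v != 0 /\ forall f, f \in L 0%N -> exists c, f v = c *: v.
  elim: j W => [|j IH] W W0 LW Lscalar.
    exists (vpick W); split=> [|f /Lscalar[c fc]]; first by rewrite vpick0.
    by exists c; apply/fc/memv_pick.
  have [W2 [W20 LW2 Lscalar2]] := exists_stable_weight_space W0 LW (L_sub0 j)
    (L_ideal j) (fun a b aL bL => Lscalar _ (L_comm j a b aL bL)).
  exact: IH W2 W20 LW2 Lscalar2.
apply: (descend N fullv V0) => [f w _ _ | f /L_N ->]; first exact: memvf.
by exists 0 => w _; rewrite zero_lfunE scale0r.
Qed.

End LieTheorem.

Lemma exists_perm2 (T : finType) (a b i j : T) : a != b -> i != j ->
  exists s : {perm T}, s a = i /\ s b = j.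
Proof.
move=> ab ij; set b' := tperm a i b.
have b'i : b' != i by rewrite -[i](tpermL a i) (inj_eq (@perm_inj _ _)) eq_sym.
exists (tperm a i * tperm b' j)%g; split; rewrite permM; last by rewrite -/b' tpermL.
by rewrite tpermL tpermD // eq_sym.
Qed.

Section PoissonNLie.
Variables (F : fieldType) (V : vectType F) (m : nat).
Variables (mul : V -> V -> V) (br : ('I_m.+2 -> V) -> V).
Hypothesis hP : is_poisson_nlie mul br.
Local Notation n := m.+2.
Local Notation widen := (widen_ord (leqnSn m.+1)).
Local Notation ext := (@ext F V n).
Implicit Types (x : 'I_n -> V) (y : 'I_m.+1 -> V) (v w : V).

Lemma ext_widen y v i : ext y v (widen i) = y i.
Proof.
rewrite /ext; case: insubP => [k _ kE | ]; last by rewrite /= ltn_ord.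
by congr y; apply: val_inj.
Qed.

Lemma ext_max y v : ext y v ord_max = v.
Proof. by rewrite /ext insubF //= ltnn. Qed.

Lemma ord_maxVwiden (j : 'I_n) : j = ord_max \/ exists k, j = widen k.
Proof.
have [jm | jm] := ltnP j m.+1; last first.
  by left; apply: val_inj; apply/eqP; rewrite /= eqn_leq jm -ltnS ltn_ord.
by right; exists (Ordinal jm); apply: val_inj.
Qed.

Lemma upd_ext_max y v w : upd (ext y v) ord_max w = ext y w.
Proof.
apply: functional_extensionality => j; rewrite /upd.
have [-> | [k ->]] := ord_maxVwiden j; first by rewrite eqxx ext_max.
by rewrite !ext_widen; case: eqP => // /(congr1 val) /= km; move: (ltn_ord k); rewrite km ltnn.
Qed.

Lemma upd_ext_widen y v i w : upd (ext y v) (widen i) w = ext (upd y i w) v.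
Proof.
apply: functional_extensionality => j; rewrite /upd.
have [-> | [k ->]] := ord_maxVwiden j.
  by rewrite !ext_max; case: eqP => // /(congr1 val) /= mi; move: (ltn_ord i); rewrite -mi ltnn.
by rewrite !ext_widen /upd; congr (if _ then _ else _).
Qed.

Lemma ext_eta x : ext (fun k => x (widen k)) (x ord_max) = x.
Proof.
apply: functional_extensionality => j.
by have [-> | [k ->]] := ord_maxVwiden j; rewrite ?ext_max ?ext_widen.
Qed.

Lemma mul_linear a : linear (mul a).
Proof. by move=> c u w; apply: (mul_linr hP). Qed.

Definition Pop a : 'End(V) := lfun_of (mul_linear a).

Lemma PopE a v : Pop a v = mul a v.
Proof. exact: lfun_ofE. Qed.

Lemma br_ext_linear y : linear (fun v => br (ext y v)).
Proof.
have brE v : br (ext y v) = br (upd (ext y 0) ord_max v) by rewrite upd_ext_max.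
by move=> c u w; rewrite !brE (br_lin hP).
Qed.

Definition Qop y : 'End(V) := lfun_of (br_ext_linear y).

Lemma QopE y v : Qop y v = br (ext y v).
Proof. exact: lfun_ofE. Qed.

Lemma mul0l a : mul 0 a = 0.
Proof. by rewrite (mul_comm hP) -PopE linear0. Qed.

Lemma mulN a v : mul a (- v) = - mul a v.
Proof. by rewrite -!PopE linearN. Qed.

Lemma br_perm_mem (W : {vspace V}) (s : 'S_n) x :
  (br (fun i => x (s i)) \in W) = (br x \in W).
Proof. by rewrite (br_skew hP) rpredZsign. Qed.

Lemma br_tperm x i j : i != j -> br (fun k => x (tperm i j k)) = - br x.
Proof. by move=> ij; rewrite (br_skew hP) odd_tperm ij expr1 scaleN1r. Qed.

Lemma upd_tperm x i j v :
  (fun k => upd x i v (tperm i j k)) = upd (fun k => x (tperm i j k)) j v.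
Proof.
by apply: functional_extensionality => k; rewrite /upd (canF_eq (tpermK i j)) tpermL.
Qed.

(* The Leibniz rule is stated for the first slot, Q_y varies the last one. *)
Lemma Qop_mul y a b : Qop y (mul a b) = mul a (Qop y b) + mul b (Qop y a).
Proof.
pose t := tperm (ord_max : 'I_n) ord0; pose x := fun k => ext y 0 (t k).
have Qop_t v : Qop y v = - br (upd x ord0 v).
  by rewrite QopE -(upd_ext_max y 0) /x -upd_tperm [in RHS]br_tperm ?opprK.
by rewrite !Qop_t (br_leibniz hP) // !mulN opprD.
Qed.

Lemma Qop_fundamental y1 y2 v :
  Qop y1 (Qop y2 v) = \sum_(i < m.+1) Qop (upd y2 i (Qop y1 (y2 i))) v + Qop y2 (Qop y1 v).
Proof.
rewrite !QopE (br_fundamental hP) big_ord_recr /= ext_max upd_ext_max.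
congr (_ + _); apply: eq_bigr => i _.
by rewrite ext_widen upd_ext_widen !QopE.
Qed.

Fixpoint derived k : {vspace V} :=
  if k is k'.+1 then vspan_pred (fun v =>
      (exists x, (forall i : 'I_n, (val i < 2)%N -> x i \in derived k') /\ v = br x)
   \/ (exists a b, [/\ a \in derived k', b \in derived k' & v = mul a b]))
  else fullv.

Lemma derived_seriesE k v : derived_series mul br k v <-> v \in derived k.
Proof.
elim: k v => [|k IH] v /=; first by rewrite memvf.
rewrite span_predP; split=> /(subvP (vspan_predS _)); apply.
  move=> _ [[x [xk ->]] | [a [b [ak [bk ->]]]]]; [left | right].
    by exists x; split=> // i /xk /IH.
  by exists a, b; split=> //; apply/IH.
move=> _ [[x [xk ->]] | [a [b [ak bk ->]]]]; [left | right].
  by exists x; split=> // i /xk /IH.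
by exists a, b; split; [apply/IH | split; [apply/IH | ]].
Qed.

Lemma derived_br k x : (forall i : 'I_n, (val i < 2)%N -> x i \in derived k) ->
  br x \in derived k.+1.
Proof. by move=> xk; apply: vspan_pred_mem; left; exists x. Qed.

Lemma derived_mul k a b : a \in derived k -> b \in derived k -> mul a b \in derived k.+1.
Proof. by move=> ak bk; apply: vspan_pred_mem; right; exists a, b. Qed.

Lemma derivedS_min k (W : {vspace V}) :
  (forall x, (forall i : 'I_n, (val i < 2)%N -> x i \in derived k) -> br x \in W) ->
  (forall a b, a \in derived k -> b \in derived k -> mul a b \in W) ->
  (derived k.+1 <= W)%VS.
Proof.
by move=> brW mulW; apply: vspan_pred_min => _ [[x [xk ->]] | [a [b [ak bk ->]]]]; auto.
Qed.

Lemma derivedS k : (derived k.+1 <= derived k)%VS.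
Proof.
elim: k => [|k IH]; first exact: subvf.
apply: derivedS_min => [x xk | a b ak bk]; [apply: derived_br | apply: derived_mul];
  by move=> *; apply: (subvP IH); auto.
Qed.

Lemma derived_subv k l : (k <= l)%N -> (derived l <= derived k)%VS.
Proof.
move=> /subnK <-; elim: (l - k)%N => [|d IH]; first exact: subvv.
exact: subv_trans (derivedS _) IH.
Qed.

(* The fundamental identity and the Leibniz rule handle the two kinds of
   generators of derived k.+1. *)
Lemma derived_Qop k y v : v \in derived k -> Qop y v \in derived k.
Proof.
elim: k y v => [|k IH] y v; first by move=> _; apply: memvf.
move=> vk; apply: (vspan_pred_lfun _ vk) => _ [[x [xk ->]] | [a [b [ak bk ->]]]]; last first.
  by rewrite Qop_mul rpredD // derived_mul // IH.
rewrite QopE (br_fundamental hP) rpred_sum // => i _; apply: derived_br => j /xk.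
by rewrite /upd; case: eqP => // -> xik; rewrite -QopE IH.
Qed.

Lemma derived_br_arg k x i : x i \in derived k -> br x \in derived k.
Proof.
move=> xik; have [im | im] := eqVneq i ord_max.
  by rewrite -[x]ext_eta -QopE derived_Qop // -im.
rewrite -(br_perm_mem _ (tperm i ord_max)) -[X in br X]ext_eta -QopE derived_Qop //.
by rewrite tpermR.
Qed.

Lemma derived_br_args2 k x i j : i != j -> x i \in derived k -> x j \in derived k ->
  br x \in derived k.+1.
Proof.
move=> ij xik xjk.
have [s [s0 s1]] := exists_perm2 (isT : ord0 != @Ordinal n 1 isT) ij.
rewrite -(br_perm_mem _ s); apply: derived_br => -[[|[|l]] //= l_lt] _.
  by rewrite (_ : Ordinal l_lt = ord0) ?s0 //; apply: val_inj.
by rewrite (_ : Ordinal l_lt = @Ordinal n 1 isT) ?s1 //; apply: val_inj.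
Qed.

Lemma derived_Qop_arg k y j v : y j \in derived k -> Qop y v \in derived k.
Proof. by move=> yjk; rewrite QopE (derived_br_arg (i := widen j)) // ext_widen. Qed.

Lemma derived_Qop_arg2 k y j v : y j \in derived k -> v \in derived k ->
  Qop y v \in derived k.+1.
Proof.
move=> yjk vk; rewrite QopE (derived_br_args2 (i := widen j) (j := ord_max)) ?ext_widen ?ext_max //.
by apply/eqP => /(congr1 val) /= jm; move: (ltn_ord j); rewrite jm ltnn.
Qed.

Lemma derived_Qop_args2 k y j1 j2 v :
  j1 != j2 -> y j1 \in derived k -> y j2 \in derived k -> Qop y v \in derived k.+1.
Proof.
by move=> j12 y1k y2k; rewrite QopE (derived_br_args2 (i := widen j1) (j := widen j2)) ?ext_widen.
Qed.

Lemma comm_PP a b : comm_lfun (Pop a) (Pop b) = 0.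
Proof.
apply/lfunP => v; rewrite comm_lfunE !PopE zero_lfunE !(mul_assoc hP) (mul_comm hP b a).
exact: subrr.
Qed.

Lemma comm_QP y a : comm_lfun (Qop y) (Pop a) = Pop (Qop y a).
Proof. by apply/lfunP => v; rewrite comm_lfunE !PopE Qop_mul addrC addKr (mul_comm hP). Qed.

Lemma comm_QQ y1 y2 :
  comm_lfun (Qop y1) (Qop y2) = \sum_(i < m.+1) Qop (upd y2 i (Qop y1 (y2 i))).
Proof. by apply/lfunP => v; rewrite comm_lfunE Qop_fundamental addrK sum_lfunE. Qed.

(* derived k is P^(k+1).  Level 2k of the filtration is spanned by the P_a
   and Q_y having an argument in derived k; level 2k+1 by those with an
   argument in derived k.+1 and by the Q_y with two arguments in derived k,
   which is where [Q_y, Q_z] lands when y and z are of level 2k. *)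
Definition Qlevel l y :=
  (exists j, y j \in derived (uphalf l)) \/
  (odd l /\ exists j1 j2, [/\ j1 != j2, y j1 \in derived l./2 & y j2 \in derived l./2]).

Definition op_level l f :=
  (exists2 a, a \in derived (uphalf l) & f = Pop a) \/ (exists2 y, Qlevel l y & f = Qop y).

Definition ops l := vspan_pred (op_level l).

Lemma Qlevel_Qop l y v : Qlevel l y -> Qop y v \in derived (uphalf l).
Proof.
case=> [[j yj] | [l_odd [j1 [j2 [j12 y1 y2]]]]]; first exact: derived_Qop_arg yj.
by rewrite uphalf_half l_odd; apply: derived_Qop_args2 j12 y1 y2.
Qed.

Lemma Qlevel_QopS l y v : Qlevel l y -> v \in derived (uphalf l) ->
  Qop y v \in derived (uphalf l.+1).
Proof.
rewrite (_ : uphalf l.+1 = (l./2).+1) //.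
case=> [[j yj] | [_ [j1 [j2 [j12 y1 y2]]]]] vl; last exact: derived_Qop_args2 j12 y1 y2.
apply: subvP (derived_subv _) _ (derived_Qop_arg2 yj vl).
by rewrite ltnS uphalf_half leq_addl.
Qed.

Lemma Qlevel_upd l y1 y2 i : Qlevel l y2 -> Qlevel l (upd y2 i (Qop y1 (y2 i))).
Proof.
have upd_mem k j : y2 j \in derived k -> upd y2 i (Qop y1 (y2 i)) j \in derived k.
  by rewrite /upd; case: eqP => // ->; apply: derived_Qop.
case=> [[j yj] | [l_odd [j1 [j2 [j12 y1j y2j]]]]]; first by left; exists j; apply: upd_mem.
by right; split=> //; exists j1, j2; split; rewrite ?upd_mem.
Qed.

Lemma Qlevel_updS l y1 y2 i : Qlevel l y1 -> Qlevel l y2 ->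
  Qlevel l.+1 (upd y2 i (Qop y1 (y2 i))).
Proof.
move=> y1l y2l; have upd_i : upd y2 i (Qop y1 (y2 i)) i = Qop y1 (y2 i) by rewrite /upd eqxx.
have uphalfS : uphalf l.+1 = (l./2).+1 by [].
case: y2l => [[c y2c] | [l_odd _]]; last first.
  left; exists i; rewrite upd_i uphalfS.
  by move: (Qlevel_Qop (y2 i) y1l); rewrite uphalf_half l_odd.
have [ic | ic] := eqVneq i c.
  by left; exists i; rewrite upd_i; apply: Qlevel_QopS => //; rewrite ic.
have upd_c : upd y2 i (Qop y1 (y2 i)) c = y2 c by rewrite /upd eq_sym (negbTE ic).
case l_odd: (odd l); move: y2c; rewrite uphalf_half l_odd => y2c.
  by left; exists c; rewrite upd_c uphalfS.
right; split; first by rewrite /= l_odd.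
have half_lS : l.+1./2 = l./2 by rewrite (_ : l.+1./2 = uphalf l) // uphalf_half l_odd.
exists i, c; rewrite half_lS upd_i upd_c; split=> //.
by move: (Qlevel_Qop (y2 i) y1l); rewrite uphalf_half l_odd.
Qed.

Lemma ops_P l a : a \in derived (uphalf l) -> Pop a \in ops l.
Proof. by move=> al; apply: vspan_pred_mem; left; exists a. Qed.

Lemma ops_Q l y : Qlevel l y -> Qop y \in ops l.
Proof. by move=> yl; apply: vspan_pred_mem; right; exists y. Qed.

Lemma ops_sub0 l : (ops l <= ops 0)%VS.
Proof.
apply: vspan_pred_min => _ [[a _ ->] | [y _ ->]]; first exact/ops_P/memvf.
by apply: ops_Q; left; exists ord0; apply: memvf.
Qed.

Lemma ops_ideal l f g : f \in ops 0 -> g \in ops l -> comm_lfun g f \in ops l.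
Proof.
move=> f0 gl; apply: (comm_lfun_vspan_pred _ gl f0) => {f g f0 gl} g f.
case=> [[a al ->] | [y yl ->]] [[b _ ->] | [z _ ->]].
- by rewrite comm_PP rpred0.
- by rewrite comm_lfunC comm_QP rpredN ops_P ?derived_Qop.
- by rewrite comm_QP ops_P ?Qlevel_Qop.
rewrite comm_lfunC comm_QQ rpredN rpred_sum // => i _.
exact/ops_Q/Qlevel_upd.
Qed.

Lemma ops_comm l f g : f \in ops l -> g \in ops l -> comm_lfun f g \in ops l.+1.
Proof.
move=> fl gl; apply: (comm_lfun_vspan_pred _ fl gl) => {f g fl gl} f g.
case=> [[a al ->] | [y yl ->]] [[b bl ->] | [z zl ->]].
- by rewrite comm_PP rpred0.
- by rewrite comm_lfunC comm_QP rpredN ops_P ?Qlevel_QopS.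
- by rewrite comm_QP ops_P ?Qlevel_QopS.
by rewrite comm_QQ rpred_sum // => i _; apply/ops_Q/Qlevel_updS.
Qed.

Lemma ops_vanish s : (forall v, v \in derived s -> v = 0) ->
  forall f, f \in ops s.*2 -> f = 0.
Proof.
move=> derived_s f fs; suff: f \in 0%VS by rewrite memv0 => /eqP.
apply: (subvP (vspan_pred_min (W := 0%VS) _) _ fs).
move=> _ [[a al ->] | [y [[j yj] | [s_odd _]] ->]]; rewrite memv0.
- rewrite uphalf_double in al.
  by apply/eqP/lfunP => v; rewrite PopE (derived_s a al) mul0l zero_lfunE.
- rewrite uphalf_double in yj.
  by apply/eqP/lfunP => v; rewrite zero_lfunE; apply/derived_s/derived_Qop_arg/yj.
- by rewrite odd_double in s_odd.
Qed.

End PoissonNLie.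

Theorem theorem5p7 (F : closedFieldType) (hchar : [pchar F] =i pred0)
    (V : vectType F) (n : nat) (hn : (2 <= n)%N)
    (mul : V -> V -> V) (br : ('I_n -> V) -> V)
    (hP : is_poisson_nlie mul br)
    (hnz : exists v : V, v != 0)
    (hsolv : solvable_pnl mul br) :
  exists v : V, v != 0 /\
    (forall x : V, exists lam : F, mul x v = lam *: v) /\
    (forall y : 'I_n.-1 -> V, exists lam : F, br (ext y v) = lam *: v).
Proof.
case: n hn br hP hsolv => [|[|m]] // _ br hP [s hs].
have derived_s v : v \in derived mul br s -> v = 0 by move/derived_seriesE; apply: hs.
have V_neq0 : (fullv : {vspace V}) != 0%VS.
  by case: hnz => v; apply: contraNneq => V0; rewrite -memv0 -V0 memvf.
have [v [v_neq0 v_eigen]] := lie_common_eigenvector hchar V_neq0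
  (ops_sub0 hP) (ops_ideal (hP := hP)) (ops_comm (hP := hP)) (ops_vanish derived_s).
exists v; split=> //; split=> [x | y].
  have [c xv] := v_eigen _ (ops_P hP (l := 0) (memvf x)).
  by exists c; rewrite -(PopE hP) xv.
have [c yv] := v_eigen (Qop hP y) (ops_Q hP (l := 0) (or_introl (ex_intro _ ord0 (memvf _)))).
by exists c; rewrite -(QopE hP) yv.
Qed.
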